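(* Let $h\in\mathbb{R}[T]$. Then $K_h\in\Lambda'$, $\det K_h=1$, and $K_h\cdot{}^{\gamma}\!\left(K_h\right)^{-1}=M_h$. Consequently, on the open $\mathbb{C}^*$-stable subset $U=Y\setminus V(ab)$ (which is preserved by every $\mu_h$), one has $\mu_h|_U=\psi'_h\circ\mu_0|_U\circ(\psi'_h)^{-1}$; in particular all the restrictions $\mu_h|_U$, $h\in\mathbb{R}[T]$, are equivalent real circle forms on $U$ (equivalence via $\mathbb{C}^*$-equivariant automorphisms of $U$).
   Context: For $k\ge1$, $W_k=\mathbb{C}^2$ is the $\mathbb{C}^*$-module with weights $(k,-k)$. Fix $m\ge1$, $n=2m+1$, and $Y=W_2\times W_n$ with coordinates $(a,b,x,y)$, $t\cdot(a,b,x,y)=(t^2a,t^{-2}b,t^nx,t^{-n}y)$; $\sigma(t)=\overline{t}^{-1}$; a real circle form is an antiholomorphic involution $\mu$ with $\mu(t\cdot p)=\sigma(t)\cdot\mu(p)$. Let $\mu_0(a,b,x,y)=(\overline{b},\overline{a},\overline{y},\overline{x})$, $T=ab$. Let $\Lambda'$ be the group of matrices $M=\begin{pmatrix}P(T)& a^nQ(T)\\ b^nS(T)& R(T)\end{pmatrix}$ with $P,Q,R,S\in\mathbb{C}[T,T^{-1}]$ and $\det M=cT^k$, $c\in\mathbb{C}^*$, $k\in\mathbb{Z}$; for such $M$ define ${}^{\gamma}M=\begin{pmatrix}\overline{R}(T)& a^n\overline{S}(T)\\ b^n\overline{Q}(T)& \overline{P}(T)\end{pmatrix}$, where the bar conjugates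 coefficients. For $h\in\mathbb{R}[T]$ (with $h=h(ab)$): $M_h=\begin{pmatrix}1-Th^2 & a^nh^n\\ -b^nh^n & \sum_{j=0}^{n-1}(Th^2)^j\end{pmatrix}$, $\varphi_h(a,b,x,y)=(a,b,M_h\binom{x}{y})$, $\mu_h=\varphi_h\circ\mu_0$, and $$K_h=\begin{pmatrix}1 & a^n\dfrac{h}{T^m}\\[2mm] b^n\dfrac{h\sum_{j=0}^{m-1}(Th^2)^j}{T^m} & \sum_{j=0}^{m}(Th^2)^j\end{pmatrix},$$ with $\psi'_h$ the automorphism of $U$ given by $\psi'_h(a,b,x,y)=(a,b,K_h\binom{x}{y})$. *)

(* The complex numbers C are modelled by an arbitrary
   numClosedFieldType (algebraically closed field with conjugation). *)
From HB Require Import structures.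
From mathcomp Require Import all_boot all_order all_algebra.
Set Implicit Arguments. Unset Strict Implicit. Unset Printing Implicit Defensive.
Import Order.TTheory GRing.Theory Num.Theory.
Local Open Scope ring_scope.

Section Defs.
Variable C : numClosedFieldType.

Definition cj (x : C) : C := Num.conj x.

(* A Laurent polynomial in T, represented as p(T) / T^k *)
Definition laurent := ({poly C} * nat)%type.
Definition leval (L : laurent) (t : C) : C := L.1.[t] / t ^+ L.2.
Definition lconj (L : laurent) : laurent := (map_poly cj L.1, L.2).

Definition mx2 (p q r s : C) : 'M[C]_2 :=
  \matrix_(i < 2, j < 2)
    if i == 0 :> nat then (if j == 0 :> nat then p else q)
    else (if j == 0 :> nat then r else s).
Definition vec2 (x y : C) : 'cV[C]_2 :=
  \matrix_(i < 2, j < 1) if i == 0 :> nat then x else y.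

(* Data (P, Q, S, R) of a matrix [[P(T), a^n Q(T)], [b^n S(T), R(T)]], T = ab *)
Record ldata := LData { lP : laurent; lQ : laurent; lS : laurent; lR : laurent }.

Definition ldmx (n : nat) (D : ldata) (a b : C) : 'M[C]_2 :=
  mx2 (leval (lP D) (a * b)) (a ^+ n * leval (lQ D) (a * b))
      (b ^+ n * leval (lS D) (a * b)) (leval (lR D) (a * b)).

Definition in_Lambda' (n : nat) (D : ldata) : Prop :=
  exists c : C, exists k : int, c != 0 /\
    forall a b : C, a * b != 0 -> \det (ldmx n D a b) = c * (a * b) ^ k.

Definition lgamma (D : ldata) : ldata :=
  LData (lconj (lR D)) (lconj (lS D)) (lconj (lQ D)) (lconj (lP D)).

(* Points of Y = W_2 x W_n : (a, b, (x, y)) *)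
Record pt := Pt { pa : C; pb : C; pv : 'cV[C]_2 }.

Definition px (p : pt) : C := pv p 0 0.
Definition py (p : pt) : C := pv p 1 0.

Definition act (n : nat) (t : C) (p : pt) : pt :=
  Pt (t ^+ 2 * pa p) (t ^- 2 * pb p) (vec2 (t ^+ n * px p) (t ^- n * py p)).

Definition sigma (t : C) : C := (cj t)^-1.

Definition inU (p : pt) : Prop := pa p * pb p != 0.

Definition mu0 (p : pt) : pt :=
  Pt (cj (pb p)) (cj (pa p)) (vec2 (cj (py p)) (cj (px p))).

Definition Mh (m : nat) (h : {poly C}) (a b : C) : 'M[C]_2 :=
  let n := m.*2.+1 in let T := a * b in let hv := h.[T] in
  mx2 (1 - T * hv ^+ 2) (a ^+ n * hv ^+ n)
      (- (b ^+ n * hv ^+ n)) (\sum_(j < n) (T * hv ^+ 2) ^+ j).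

Definition phih (m : nat) (h : {poly C}) (p : pt) : pt :=
  Pt (pa p) (pb p) (Mh m h (pa p) (pb p) *m pv p).

Definition muh (m : nat) (h : {poly C}) (p : pt) : pt := phih m h (mu0 p).

Definition Kdata (m : nat) (h : {poly C}) : ldata :=
  LData (1, 0%N)
        (h, m)
        (h * \sum_(j < m) ('X * h ^+ 2) ^+ j, m)
        (\sum_(j < m.+1) ('X * h ^+ 2) ^+ j, 0%N).

Definition Kmx (m : nat) (h : {poly C}) (a b : C) : 'M[C]_2 :=
  ldmx m.*2.+1 (Kdata m h) a b.

Definition psih (m : nat) (h : {poly C}) (p : pt) : pt :=
  Pt (pa p) (pb p) (Kmx m h (pa p) (pb p) *m pv p).

End Defs.

From HB Require Import structures.
From mathcomp Require Import all_boot all_order all_algebra ring.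
Import Order.TTheory GRing.Theory Num.Theory.
Set Implicit Arguments. Unset Strict Implicit.
Local Open Scope ring_scope.

(* Put T = ab, u = T h(T)^2 and S = sum_(j<m) u^j.  On U the entries of K_h are
   1, a^n q', b^n q' S and 1 + uS with q' = h/T^m; as h is real, ^gamma K_h has the same
   entries with the diagonal reversed and S moved to the other corner.  Because
   (a^n q')(b^n q') = u, both determinants equal 1 + uS - uS = 1, and M_h ^gamma K_h = K_h
   becomes a polynomial identity once (1 - u) S = 1 - u^m and
   S_(2m+1) = 1 + uS + u^(m+1) S are used.  The conjugation formula then holds for any
   M, K with M ^gamma K = K, since mu0 carries K at (a, b) to ^gamma K at (conj b, conj a);
   equivariance holds for every matrix of the shape [[P(T), a^n Q(T)], [b^n S(T), R(T)]]. *)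

Section GeometricSums.
Variables (R : comPzRingType) (u : R).

Lemma geom_sumS k : \sum_(j < k.+1) u ^+ j = 1 + u * \sum_(j < k) u ^+ j.
Proof.
by rewrite big_ord_recl expr0 mulr_sumr; congr (_ + _); apply: eq_bigr => j _; rewrite exprS.
Qed.

Lemma mulr_subr1_geom_sum k : (1 - u) * \sum_(j < k) u ^+ j = 1 - u ^+ k.
Proof. by rewrite -opprB mulNr -subrX1 opprB. Qed.

Lemma geom_sum_odd k :
  \sum_(j < k.*2.+1) u ^+ j = 1 + u * \sum_(j < k) u ^+ j + u ^+ k.+1 * \sum_(j < k) u ^+ j.
Proof.
rewrite -addnn -addSn big_split_ord /= geom_sumS [u ^+ k.+1 * _]mulr_sumr.
by congr (_ + _); apply: eq_bigr => j _; rewrite exprD.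
Qed.

End GeometricSums.

Section Mx2.
Variable C : numClosedFieldType.
Implicit Types p q r s x y : C.

Lemma det_mx2 p q r s : \det (mx2 p q r s) = p * s - q * r.
Proof.
rewrite (expand_det_row _ 0) big_ord_recl big_ord1 /cofactor !det_mx11 !mxE /=.
by rewrite expr0 expr1 mul1r; ring.
Qed.

Lemma mul_mx2 p q r s p' q' r' s' :
  mx2 p q r s *m mx2 p' q' r' s' =
  mx2 (p * p' + q * r') (p * q' + q * s') (r * p' + s * r') (r * q' + s * s').
Proof.
apply/matrixP => i j; rewrite !mxE big_ord_recl big_ord1 !mxE /=.
by case: i => [[|[|//]] ?]; case: j => [[|[|//]] ?].
Qed.

Lemma mul_mx2_vec2 p q r s x y :
  mx2 p q r s *m vec2 x y = vec2 (p * x + q * y) (r * x + s * y).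
Proof.
apply/matrixP => i j; rewrite !mxE big_ord_recl big_ord1 !mxE /=.
by case: i => [[|[|//]] ?].
Qed.

Lemma vec2_eta (v : 'cV[C]_2) : vec2 (v 0 0) (v 1 0) = v.
Proof.
apply/matrixP => i j; rewrite !mxE (ord1 j).
by case: i => [[|[|//]] ?] /=; congr (v _ _); apply: val_inj.
Qed.

Lemma vec2_0 x y : vec2 x y 0 0 = x. Proof. by rewrite mxE. Qed.
Lemma vec2_1 x y : vec2 x y 1 0 = y. Proof. by rewrite mxE. Qed.

End Mx2.

(* With q = a^n h / T^m, r = b^n h / T^m (so q r = u) and w = u^m, these are the
   shapes of K_h, ^gamma K_h and M_h at a point of U. *)
Section KhAlgebra.
Variables (C : numClosedFieldType) (q r u S : C).
Hypothesis qr_u : q * r = u.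

Lemma det_mx2_K : \det (mx2 1 q (r * S) (1 + u * S)) = 1.
Proof. by rewrite det_mx2 -qr_u; ring. Qed.

Lemma det_mx2_gammaK : \det (mx2 (1 + u * S) (q * S) r 1) = 1.
Proof. by rewrite det_mx2 -qr_u; ring. Qed.

Lemma mul_mx2_M_gammaK w : (1 - u) * S = 1 - w ->
  mx2 (1 - u) (q * w) (- (r * w)) (1 + u * S + u * w * S) *m mx2 (1 + u * S) (q * S) r 1 =
  mx2 1 q (r * S) (1 + u * S).
Proof.
move=> uSw; have -> : w = 1 - (1 - u) * S by rewrite uSw opprB addrC subrK.
by rewrite mul_mx2 -qr_u; congr mx2; ring.
Qed.

End KhAlgebra.

HB.instance Definition _ (C : numClosedFieldType) :=
  GRing.RMorphism.copy (@cj C) (@Num.Def.conjC C).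

Lemma map_poly_conj_real (C : numClosedFieldType) (p : {poly C}) :
  p \is a polyOver Num.real -> map_poly (@cj C) p = p.
Proof. by move=> /polyOverP p_real; apply/polyP => i; rewrite coef_map; apply: conj_Creal. Qed.

Section Kh.
Variables (C : numClosedFieldType) (m : nat) (h : {poly C}).
Hypothesis h_real : h \is a polyOver Num.real.

Local Notation n := m.*2.+1.
Local Notation u a b := (a * b * h.[a * b] ^+ 2).
Local Notation S a b := (\sum_(j < m) (u a b) ^+ j).
Local Notation c a b := (h.[a * b] / (a * b) ^+ m).

Lemma horner_geom_sum k t :
  (\sum_(j < k) ('X * h ^+ 2) ^+ j).[t] = \sum_(j < k) (t * h.[t] ^+ 2) ^+ j.
Proof. by rewrite horner_sum; apply: eq_bigr => j _; rewrite !hornerE. Qed.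

Lemma Kmx_mx2 a b :
  Kmx m h a b = mx2 1 (a ^+ n * c a b) (b ^+ n * c a b * S a b) (1 + u a b * S a b).
Proof.
rewrite /Kmx /ldmx /leval /= hornerM !horner_geom_sum geom_sumS hornerC !divr1.
by congr mx2; ring.
Qed.

Lemma map_poly_conj_geom_sum k :
  map_poly (@cj C) (\sum_(j < k) ('X * h ^+ 2) ^+ j) = \sum_(j < k) ('X * h ^+ 2) ^+ j.
Proof.
rewrite rmorph_sum; apply: eq_bigr => j _.
by rewrite rmorphXn rmorphM rmorphXn /= map_polyX map_poly_conj_real.
Qed.

Lemma gammaK_mx2 a b :
  ldmx n (lgamma (Kdata m h)) a b =
  mx2 (1 + u a b * S a b) (a ^+ n * c a b * S a b) (b ^+ n * c a b) 1.
Proof.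
rewrite /ldmx /lgamma /lconj /leval /= rmorph1 rmorphM /=.
rewrite !map_poly_conj_geom_sum map_poly_conj_real //.
rewrite hornerM !horner_geom_sum geom_sumS hornerC !divr1.
by congr mx2; ring.
Qed.

Lemma mul_qr_Kmx a b : a * b != 0 -> a ^+ n * c a b * (b ^+ n * c a b) = u a b.
Proof.
move=> ab0; rewrite mulrACA -exprMn exprS -addnn exprD.
by field; rewrite ?expf_neq0.
Qed.

Lemma Mh_mx2 a b : a * b != 0 ->
  Mh m h a b = mx2 (1 - u a b) (a ^+ n * c a b * u a b ^+ m) (- (b ^+ n * c a b * u a b ^+ m))
                   (1 + u a b * S a b + u a b * u a b ^+ m * S a b).
Proof.
move=> ab0; have h_pow : h.[a * b] ^+ n = c a b * u a b ^+ m.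
  by rewrite exprS -mul2n exprM [(_ * _ * _) ^+ m]exprMn; field; rewrite expf_neq0.
by rewrite /Mh /= geom_sum_odd [_ ^+ m.+1]exprS !h_pow !mulrA.
Qed.

Lemma det_Kmx a b : a * b != 0 -> \det (Kmx m h a b) = 1.
Proof. by move=> ab0; rewrite Kmx_mx2 det_mx2_K // mul_qr_Kmx. Qed.

Lemma det_gammaK a b : a * b != 0 -> \det (ldmx n (lgamma (Kdata m h)) a b) = 1.
Proof. by move=> ab0; rewrite gammaK_mx2 det_mx2_gammaK // mul_qr_Kmx. Qed.

Lemma mul_Mh_gammaK a b : a * b != 0 ->
  Mh m h a b *m ldmx n (lgamma (Kdata m h)) a b = Kmx m h a b.
Proof.
move=> ab0; rewrite Mh_mx2 // gammaK_mx2 Kmx_mx2.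
by rewrite mul_mx2_M_gammaK ?mul_qr_Kmx ?mulr_subr1_geom_sum.
Qed.

End Kh.

Section RealCircleForms.
Variables (C : numClosedFieldType) (n : nat).
Implicit Types (t : C) (p : pt C) (v w : 'cV[C]_2) (G : C -> C -> 'M[C]_2).

Definition twist G p : pt C := Pt (pa p) (pb p) (G (pa p) (pb p) *m pv p).

Definition weight_scale t v : 'cV[C]_2 := vec2 (t ^+ n * v 0 0) (t ^- n * v 1 0).

Definition conjswap v : 'cV[C]_2 := vec2 (cj (v 1 0)) (cj (v 0 0)).

Definition weight_equivariant G := forall t a b v, t != 0 ->
  G (t ^+ 2 * a) (t ^- 2 * b) *m weight_scale t v = weight_scale t (G a b *m v).

Lemma twist_act G t p : weight_equivariant G -> t != 0 ->
  twist G (act n t p) = act n t (twist G p).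
Proof. by case: p => a b v /= G_eq t0; rewrite /twist /= G_eq. Qed.

Lemma laurent_weight_equivariant (P Q S R : C -> C) :
  weight_equivariant
    (fun a b => mx2 (P (a * b)) (a ^+ n * Q (a * b)) (b ^+ n * S (a * b)) (R (a * b))).
Proof.
move=> t a b v t0; rewrite -[v]vec2_eta /weight_scale !mul_mx2_vec2 !vec2_0 !vec2_1.
have -> : t ^+ 2 * a * (t ^- 2 * b) = a * b by rewrite mulrACA mulfV ?mul1r // expf_neq0.
rewrite !exprMn exprVn -exprM mulnC exprM.
have tn0 : t ^+ n != 0 by rewrite expf_neq0.
by move: (t ^+ n) tn0 => s s0; congr vec2; field.
Qed.

Lemma ldmx_weight_equivariant D : weight_equivariant (ldmx n D).
Proof.
exact: (laurent_weight_equivariant (leval (lP D)) (leval (lQ D)) (leval (lS D)) (leval (lR D))).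
Qed.

Lemma inU_mu0 p : inU (mu0 p) = inU p.
Proof. by rewrite /inU /= -rmorphM mulrC /cj conjC_eq0. Qed.

Lemma mu0K p : mu0 (mu0 p) = p.
Proof. by case: p => a b v; rewrite /mu0 /px /py /= !vec2_0 !vec2_1 /cj !conjCK vec2_eta. Qed.

Lemma mu0_act t p : mu0 (act n t p) = act n (sigma t) (mu0 p).
Proof.
case: p => a b v; rewrite /mu0 /act /px /py /sigma /= !vec2_0 !vec2_1.
by rewrite !rmorphM !fmorphV !rmorphXn !exprVn !invrK.
Qed.

Lemma leval_conj (L : laurent C) t : leval (lconj L) (cj t) = cj (leval L t).
Proof. by rewrite /leval /= rmorphM fmorphV rmorphXn horner_map. Qed.

Lemma gamma_conjswap D a b w :
  ldmx n (lgamma D) (cj b) (cj a) *m conjswap w = conjswap (ldmx n D a b *m w).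
Proof.
rewrite -[w]vec2_eta /ldmx /conjswap /= -rmorphM mulrC !leval_conj.
rewrite !mul_mx2_vec2 !vec2_0 !vec2_1.
by congr vec2; rewrite rmorphD !rmorphM rmorphXn addrC.
Qed.

Lemma twist_invmxK G p : G (pa p) (pb p) \in unitmx ->
  twist (fun a b => invmx (G a b)) (twist G p) = p.
Proof. by case: p => a b v /= Gu; rewrite /twist /= mulKmx. Qed.

Lemma twist_invmxVK G p : G (pa p) (pb p) \in unitmx ->
  twist G (twist (fun a b => invmx (G a b)) p) = p.
Proof. by case: p => a b v /= Gu; rewrite /twist /= mulKVmx. Qed.

Lemma twist_mu0_conj D (M : C -> C -> 'M[C]_2) p : ldmx n D (pa p) (pb p) \in unitmx ->
  M (cj (pb p)) (cj (pa p)) *m ldmx n (lgamma D) (cj (pb p)) (cj (pa p)) =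
    ldmx n D (cj (pb p)) (cj (pa p)) ->
  twist M (mu0 p) = twist (ldmx n D) (mu0 (twist (fun a b => invmx (ldmx n D a b)) p)).
Proof.
case: p => a b v /= Du MgD; rewrite /twist /=; congr Pt.
rewrite -MgD -mulmxA; congr (_ *m _).
change (conjswap v = ldmx n (lgamma D) (cj b) (cj a) *m conjswap (invmx (ldmx n D a b) *m v)).
by rewrite gamma_conjswap mulKVmx.
Qed.

End RealCircleForms.

Lemma Mh_weight_equivariant (C : numClosedFieldType) m (h : {poly C}) :
  weight_equivariant m.*2.+1 (Mh m h).
Proof.
pose P T := 1 - T * h.[T] ^+ 2; pose Q T := h.[T] ^+ m.*2.+1.
pose R T := \sum_(j < m.*2.+1) (T * h.[T] ^+ 2) ^+ j.
have Mh_laurent x y :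
  Mh m h x y =
  mx2 (P (x * y)) (x ^+ m.*2.+1 * Q (x * y)) (y ^+ m.*2.+1 * - Q (x * y)) (R (x * y)).
  by rewrite /Mh mulrN.
move=> t a b v t0; rewrite !Mh_laurent.
exact: (laurent_weight_equivariant _ P Q (fun T => - Q T) R).
Qed.

Theorem lemma3p3 (C : numClosedFieldType) (m : nat) (hm : (0 < m)%N)
    (h : {poly C}) (hreal : h \is a polyOver Num.real) :
  let n := m.*2.+1 in
  in_Lambda' n (Kdata m h) /\
  [/\
      (forall a b : C, a * b != 0 -> \det (Kmx m h a b) = 1),
      (forall a b : C, a * b != 0 ->
         Kmx m h a b *m invmx (ldmx n (lgamma (Kdata m h)) a b) = Mh m h a b),
      (forall p : pt C, inU p -> inU (muh m h p)),
      (exists psinv : pt C -> pt C,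
         [/\ (forall p : pt C, inU p ->
               [/\ inU (psih m h p), inU (psinv p),
                   psinv (psih m h p) = p & psih m h (psinv p) = p]),
             (forall (t : C) (p : pt C), t != 0 ->
               psih m h (act n t p) = act n t (psih m h p))
           & forall p : pt C, inU p -> muh m h p = psih m h (mu0 (psinv p))])
    & (forall p : pt C, inU p ->
         muh m h (muh m h p) = p /\
         forall t : C, t != 0 -> muh m h (act n t p) = act n (sigma t) (muh m h p))].
Proof.
move=> n.
have K_unit a b : a * b != 0 -> Kmx m h a b \in unitmx.
  by move=> ab0; rewrite unitmxE det_Kmx ?unitr1.
pose psinv := twist (fun a b => invmx (Kmx m h a b)).
have muh_conj p : inU p -> muh m h p = psih m h (mu0 (psinv p)).
  move=> pU; apply: twist_mu0_conj; first exact: K_unit.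
  by apply: (mul_Mh_gammaK m hreal); change (inU (mu0 p)); rewrite inU_mu0.
have psinvK p : inU p -> psinv (psih m h p) = p by move=> pU; apply: twist_invmxK; rewrite K_unit.
have psinvVK p : inU p -> psih m h (psinv p) = p by move=> pU; apply: twist_invmxVK; rewrite K_unit.
split; first by exists 1, 0; split=> [|a b ab0]; rewrite ?oner_neq0 ?det_Kmx ?expr0z ?mulr1.
split=> [||p||p pU].
- exact: det_Kmx.
- move=> a b ab0; rewrite -(mul_Mh_gammaK m hreal ab0) mulmxK //.
  by rewrite unitmxE (det_gammaK m hreal) ?unitr1.
- by rewrite -inU_mu0.
- exists psinv; split=> [q qU | t q t0 | //].
  + by split; rewrite ?psinvK ?psinvVK.
  + exact: twist_act (ldmx_weight_equivariant _ _) t0.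
have qU : inU (mu0 (psinv p)) by rewrite inU_mu0.
split=> [|t t0].
- by rewrite (muh_conj p pU) muh_conj // psinvK // mu0K psinvVK.
- rewrite /muh mu0_act; apply: twist_act (Mh_weight_equivariant _ _) _.
  by rewrite invr_eq0 /cj conjC_eq0.
Qed.
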